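(* Let $X=\{a_1,\dots,a_\ell\}$ be a finite set of $\ell$ distinct points, let $N\ge 2$, let $c_N: X^N\to\mathbb{R}\cup\{+\infty\}$ be an arbitrary cost function, and let $\lambda_*\in\mathcal{P}(X)$. (a) The Kantorovich problem $$\text{minimize } C[\gamma]=\int_{X^N} c_N(x_1,\dots,x_N)\,d\gamma(x_1,\dots,x_N)\ \text{ over }\gamma\in\mathcal{P}_{sym}(X^N)\text{ subject to } M_1\gamma=\lambda_*$$ admits a minimizer which is an SAE state with marginal $\lambda_*$. Moreover, when $c_N$ is symmetric (i.e. invariant under permutations of its $N$ arguments), this SAE state also minimizes $C[\gamma]$ over all $\gamma\in\mathcal{P}(X^N)$ all of whose one-point marginals equal $\lambda_*$. (b) If in addition $c_N(x_1,\dots,x_N)=\sum_{1\le i<j\le N}c(x_i,x_j)$ for some $c:X\times X\to\mathbb{R}\cup\{+\infty\}$, then the minimum value of the Kantorovich problem in (a) equals the minimum of $$I[\alpha,\lambda^{(1)},\dots,\lambda^{(\ell)}]=\sum_{\nu=1}^\ell \alpha^{(\nu)}\Big(\tfrac{N^2}{2}\int_{X\times X}c(x,y)\,d\lambda^{(\nu)}(x)\,d\lambda^{(\nu)}(y)-\tfrac N2\int_X c(x,x)\,d\lambda^{(\nu)}(x)\Big)$$ over $\alpha=(\alpha^{(1)},\dots,\alpha^{(\ell)})\in\mathbb{R}^\ell$ and $\lambda^{(1)},\dots,\lambda^{(\ell)}\in\mathcal{P}_{\frac1N}(X)$ subject to $\alpha^{(\nu)}\ge 0$ for all $\nu$ and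 $\sum_{\nu=1}^\ell\alpha^{(\nu)}\lambda^{(\nu)}=\lambda_*$. Moreover, if $(\alpha,\lambda^{(1)},\dots,\lambda^{(\ell)})$ is any minimizer of this reduced problem, then $\gamma=\sum_{\nu=1}^\ell\alpha^{(\nu)}\psi_N(\lambda^{(\nu)})$ is a minimizer of the Kantorovich problem in (a).
   Context: $\mathcal{P}(X)$ denotes the probability measures on $X$ (identified with vectors $(\lambda_1,\dots,\lambda_\ell)$, $\lambda_i=\lambda(\{a_i\})$), and $\delta_i$ the Dirac measure at $a_i$. The symmetrization operator $S$ on measures on $X^N$ is $(S\gamma)(A_1\times\cdots\times A_N)=\frac1{N!}\sum_{\sigma\in S_N}\gamma(A_{\sigma(1)}\times\cdots\times A_{\sigma(N)})$; $\mathcal{P}_{sym}(X^N)$ is the set of probability measures $\gamma$ on $X^N$ with $S\gamma=\gamma$. For $\gamma\in\mathcal{P}(X^N)$, $M_1\gamma$ is its first one-point marginal, $(M_1\gamma)(A)=\gamma(A\times X^{N-1})$. $\mathcal{P}_{\frac1N}(X)=\{\lambda\in\mathcal{P}(X):\lambda_i\in\frac1N\mathbb{Z}\ \forall i\}$. For $\lambda\in\mathcal{P}_{\frac1N}(X)$, $\psi_N(\lambda)=S(\delta_{a_{i_1}}\otimes\cdots\otimes\delta_{a_{i_N}})$ where $i_1\le\dots\le i_N$ is the unique nondecreasing index sequence in which each index $i$ appears exactly $N\lambda_i$ times. An SAE state with marginal $\lambda_*$ is a probability measure on $X^N$ of the form $\gamma=\sum_{\nu=1}^\ell\alpha^{(\nu)}S(\delta_{T_1(a_\nu)}\otimes\cdots\otimes\delta_{T_N(a_\nu)})$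 for some maps $T_1,\dots,T_N:X\to X$ and weights $\alpha^{(\nu)}\ge 0$ such that $\sum_{\nu=1}^\ell\alpha^{(\nu)}\lambda^{(\nu)}=\lambda_*$, where $\lambda^{(\nu)}=\frac1N\sum_{k=1}^N\delta_{T_k(a_\nu)}$. *)

From HB Require Import structures.
From mathcomp Require Import all_boot all_order all_algebra all_fingroup.
From mathcomp Require Import reals constructive_ereal.
Set Implicit Arguments. Unset Strict Implicit. Unset Printing Implicit Defensive.
Import Order.TTheory GRing.Theory Num.Theory.
Local Open Scope ring_scope.

(* X = {a_1,...,a_l} is identified with 'I_l (a_i <-> i);
   a point of X^N is a configuration x : 'I_N -> 'I_l;
   a measure on a finite set T is a weight function {ffun T -> R}. *)
Definition config (N l : nat) := {ffun 'I_N -> 'I_l}.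

Section Defs.
Variable R : realType.

Definition is_prob (T : finType) (mu : {ffun T -> R}) : Prop :=
  (forall t, 0 <= mu t) /\ \sum_(t : T) mu t = 1.

Variables N l : nat.

Definition symmetrize (g : {ffun config N l -> R}) : {ffun config N l -> R} :=
  [ffun x : config N l => (N`!%:R)^-1 * \sum_(s : 'S_N) g [ffun i => x (s i)]].

Definition is_sym (g : {ffun config N l -> R}) : Prop := symmetrize g = g.

(* Dirac mass at a configuration y : delta_{y_1} (x) ... (x) delta_{y_N} *)
Definition dirac_cfg (y : config N l) : {ffun config N l -> R} :=
  [ffun x : config N l => (x == y)%:R].

Definition marg (k : 'I_N) (g : {ffun config N l -> R}) : {ffun 'I_l -> R} :=
  [ffun a => \sum_(x : config N l | x k == a) g x].

Definition M1 (g : {ffun config N l -> R}) : {ffun 'I_l -> R} :=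
  [ffun a => \sum_(x : config N l |
      [exists k : 'I_N, (nat_of_ord k == 0)%N && (x k == a)]) g x].

(* cost functional C[gamma] = int c_N dgamma, with 0 * (+oo) = 0 *)
Definition cost (cN : config N l -> \bar R) (g : {ffun config N l -> R}) : \bar R :=
  (\sum_(x : config N l) (g x)%:E * cN x)%E.

Definition lam_of (T : 'I_N -> 'I_l -> 'I_l) (nu : 'I_l) : {ffun 'I_l -> R} :=
  [ffun a => (N%:R)^-1 * \sum_(k < N) (T k nu == a)%:R].

Definition SAE_state (lam_star : {ffun 'I_l -> R}) (g : {ffun config N l -> R}) : Prop :=
  is_prob g /\
  exists (T : 'I_N -> 'I_l -> 'I_l) (alpha : 'I_l -> R),
    (forall nu, 0 <= alpha nu) /\
    (forall a, \sum_(nu < l) alpha nu * lam_of T nu a = lam_star a) /\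
    g = [ffun x : config N l =>
           \sum_(nu < l) alpha nu * symmetrize (dirac_cfg [ffun k => T k nu]) x].

Definition kant_feasible (lam_star : {ffun 'I_l -> R}) (g : {ffun config N l -> R}) : Prop :=
  is_prob g /\ is_sym g /\ M1 g = lam_star.

Definition kant_minimizer (cN : config N l -> \bar R) (lam_star : {ffun 'I_l -> R})
    (g : {ffun config N l -> R}) : Prop :=
  kant_feasible lam_star g /\
  forall g', kant_feasible lam_star g' -> (cost cN g <= cost cN g')%E.

Definition sym_cost (cN : config N l -> \bar R) : Prop :=
  forall (x : config N l) (s : 'S_N), cN [ffun i => x (s i)] = cN x.

Definition pair_cost (c : 'I_l -> 'I_l -> \bar R) (x : config N l) : \bar R :=
  (\sum_(i < N) \sum_(j < N | (i < j)%N) c (x i) (x j))%E.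

Definition in_P1N (lam : {ffun 'I_l -> R}) : Prop :=
  is_prob lam /\ forall i, exists m : int, lam i = m%:~R / N%:R.

(* psi_N(lambda) = S(delta_{a_{i_1}} (x) ... (x) delta_{a_{i_N}}) where
   (i_1 <= ... <= i_N) is the unique nondecreasing index sequence in which each
   index i appears exactly N lambda_i times (picked among configurations;
   0 if no such sequence exists, which never happens for lambda in P_{1/N}). *)
Definition sorted_cfg_for (lam : {ffun 'I_l -> R}) (y : config N l) : bool :=
  [forall k1 : 'I_N, forall k2 : 'I_N, (k1 <= k2)%N ==> (y k1 <= y k2)%N] &&
  [forall i : 'I_l, #|[pred k : 'I_N | y k == i]|%:R == N%:R * lam i].

Definition psiN (lam : {ffun 'I_l -> R}) : {ffun config N l -> R} :=
  match [pick y : config N l | sorted_cfg_for lam y] with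
  | Some y => symmetrize (dirac_cfg y)
  | None => 0
  end.

(* reduced functional
   I = sum_nu alpha_nu ( N^2/2 int int c dlam dlam - N/2 int c(x,x) dlam ),
   with the diagonal terms grouped: coefficient of c(x,x) is
   (N^2 lam_x^2 - N lam_x)/2. *)
Definition I_red (c : 'I_l -> 'I_l -> \bar R) (alpha : 'I_l -> R)
    (Lam : 'I_l -> {ffun 'I_l -> R}) : \bar R :=
  (\sum_(nu < l) (alpha nu)%:E *
     ( (N%:R ^+ 2 / 2)%:E *
         (\sum_(x < l) \sum_(y < l | y != x) (Lam nu x * Lam nu y)%:E * c x y)
       + \sum_(x < l)
           ((N%:R ^+ 2 * Lam nu x ^+ 2 - N%:R * Lam nu x) / 2)%:E * c x x))%E.

Definition red_feasible (lam_star : {ffun 'I_l -> R}) (alpha : 'I_l -> R)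
    (Lam : 'I_l -> {ffun 'I_l -> R}) : Prop :=
  (forall nu, 0 <= alpha nu) /\ (forall nu, in_P1N (Lam nu)) /\
  (forall a, \sum_(nu < l) alpha nu * Lam nu a = lam_star a).

Definition red_minimizer (c : 'I_l -> 'I_l -> \bar R) (lam_star : {ffun 'I_l -> R})
    (alpha : 'I_l -> R) (Lam : 'I_l -> {ffun 'I_l -> R}) : Prop :=
  red_feasible lam_star alpha Lam /\
  forall alpha' Lam', red_feasible lam_star alpha' Lam' ->
    (I_red c alpha Lam <= I_red c alpha' Lam')%E.

Definition psi_comb (alpha : 'I_l -> R) (Lam : 'I_l -> {ffun 'I_l -> R}) :
    {ffun config N l -> R} :=
  [ffun x : config N l => \sum_(nu < l) alpha nu * psiN (Lam nu) x].

End Defs.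

From HB Require Import structures.
From mathcomp Require Import all_boot all_order all_algebra all_fingroup.
From mathcomp Require Import reals constructive_ereal.
From mathcomp Require Import ring.
From Stdlib Require Import Classical.
Unset Printing Implicit Defensive.
Import Order.TTheory GRing.Theory Num.Theory.
Local Open Scope ring_scope.

(** A symmetric plan is the symmetrization of a weight vector [w] on configurations,
   and its one-point marginal is [sum_y w_y lambda_y], where [lambda_y] is the empirical
   measure of the configuration [y].  The symmetric Kantorovich problem is therefore a
   linear program in [w >= 0] with the [l] constraints [sum_y w_y lambda_y = lambda_*]
   and (possibly infinite) cost [sum_y w_y C[S delta_y]].  Moving along a kernel
   direction of the constraints until a weight vanishes does not increase the cost, so
   some minimizer has linearly independent columns on its support, hence at most [l]
   nonzero weights: it is an SAE state.  For a symmetric cost, symmetrizing a plan with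
   marginals [lambda_*] keeps its cost.

   For a pair cost, averaging over permutations weighs each ordered pair of distinct
   sites by 1/2, so [C[S delta_y]] depends only on [lambda_y], through
   [N^2/2 int int c dlambda dlambda - N/2 int c(x,x) dlambda].  Hence SAE states and the
   states [sum_nu alpha_nu psi_N(lambda^nu)] both have cost [I[alpha, lambda]], so the
   Kantorovich and reduced problems have the same minimum. *)

Lemma sumr_delta {T : pzSemiRingType} {I : finType} (i : I) (F : I -> T) :
  \sum_j (i == j)%:R * F j = F i.
Proof.
rewrite (bigD1 i) //= eqxx mul1r big1 ?addr0 // => j.
by rewrite eq_sym => /negPf ->; rewrite mul0r.
Qed.

Section Symmetrization.
Context {R : realType} {N l : nat}.
Implicit Types (g : {ffun config N l -> R}) (x y : config N l) (s t : 'S_N).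

Definition permute s x : config N l := [ffun i => x (s i)].

Lemma permuteM s t x : permute s (permute t x) = permute (s * t) x.
Proof. by apply/ffunP => i; rewrite !ffunE permM. Qed.

Lemma permute1 x : permute 1 x = x.
Proof. by apply/ffunP => i; rewrite !ffunE perm1. Qed.

Lemma permuteKV s x : permute s (permute (s^-1)%g x) = x.
Proof. by rewrite permuteM mulgV permute1. Qed.

Lemma permute_inj s : injective (permute s).
Proof. by move=> x y /(congr1 (permute (s^-1)%g)); rewrite !permuteM mulVg !permute1. Qed.

Lemma big_permute {T : Type} {idx : T} {op : Monoid.com_law idx} (F : config N l -> T) s :
  \big[op/idx]_x F (permute s x) = \big[op/idx]_x F x.
Proof. by rewrite [RHS](reindex_inj (permute_inj s)). Qed.

Lemma natr_fact_neq0 : (N`!%:R : R) != 0.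
Proof. by rewrite pnatr_eq0 -lt0n fact_gt0. Qed.

Lemma sum_perm_cst (a : R) : \sum_(s : 'S_N) a = N`!%:R * a.
Proof. by rewrite sumr_const card_Sn mulr_natl. Qed.

Lemma symmetrizeE g x : symmetrize g x = (N`!%:R)^-1 * \sum_s g (permute s x).
Proof. by rewrite ffunE. Qed.

Lemma sum_symmetrize g : \sum_x symmetrize g x = \sum_x g x.
Proof.
under eq_bigr do rewrite symmetrizeE.
rewrite -mulr_sumr exchange_big /=.
under eq_bigr do rewrite (big_permute (fun x => g x)).
by rewrite sum_perm_cst mulKf ?natr_fact_neq0.
Qed.

Lemma symmetrize_ge0 g : (forall x, 0 <= g x) -> forall x, 0 <= symmetrize g x.
Proof.
by move=> g0 x; rewrite symmetrizeE mulr_ge0 ?invr_ge0 ?ler0n ?sumr_ge0.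
Qed.

Lemma symmetrize_permute g s x : symmetrize g (permute s x) = symmetrize g x.
Proof.
rewrite !symmetrizeE (reindex_inj (mulIg (s^-1)%g)) /=.
by congr (_ * _); apply: eq_bigr => t _; rewrite permuteM mulgKV.
Qed.

Lemma symmetrize_idem g : symmetrize (symmetrize g) = symmetrize g.
Proof.
apply/ffunP => x; rewrite symmetrizeE.
under eq_bigr do rewrite symmetrize_permute.
by rewrite sum_perm_cst mulKf ?natr_fact_neq0.
Qed.

Lemma is_prob_symmetrize g : is_prob g -> is_prob (symmetrize g).
Proof. by case=> g0 g1; split; [exact: symmetrize_ge0 | rewrite sum_symmetrize]. Qed.

Lemma symmetrize_dirac_decomp g :
  symmetrize g = [ffun x => \sum_y g y * symmetrize (dirac_cfg R y) x].
Proof.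
apply/ffunP => x; rewrite !ffunE.
under [RHS]eq_bigr do rewrite symmetrizeE mulrCA.
rewrite -mulr_sumr; congr (_ * _).
under [RHS]eq_bigr do rewrite mulr_sumr.
rewrite [RHS]exchange_big; apply: eq_bigr => s _ /=.
rewrite (bigD1 (permute s x)) //= ffunE eqxx mulr1 big1 ?addr0 // => y.
by rewrite ffunE eq_sym => /negPf ->; rewrite mulr0.
Qed.

End Symmetrization.

Section Marginals.
Context {R : realType} {N l : nat}.
Implicit Types (g : {ffun config N l -> R}) (y : config N l).

Definition empirical y : {ffun 'I_l -> R} :=
  [ffun a => (N%:R)^-1 * \sum_(k < N) (y k == a)%:R].

Lemma lam_ofE (T : 'I_N -> 'I_l -> 'I_l) nu :
  lam_of R T nu = empirical [ffun k => T k nu].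
Proof.
by apply/ffunP => a; rewrite !ffunE; congr (_ * _); apply: eq_bigr => k; rewrite ffunE.
Qed.

Lemma empirical_ge0 y a : 0 <= empirical y a.
Proof. by rewrite ffunE mulr_ge0 ?invr_ge0 ?ler0n ?sumr_ge0. Qed.

Lemma empiricalE y a : empirical y a = #|[pred k | y k == a]|%:R / N%:R.
Proof.
rewrite ffunE mulrC -sum1_card natr_sum [in RHS]big_mkcond /=.
by congr (_ * _); apply: eq_bigr => k _; rewrite inE; case: eqP.
Qed.

Lemma sum_empirical y : (0 < N)%N -> \sum_a empirical y a = 1.
Proof.
move=> N_gt0; under eq_bigr do rewrite ffunE.
rewrite -mulr_sumr exchange_big /=.
have sum_indicator k : \sum_a ((y k == a)%:R : R) = 1.
  by under eq_bigr do rewrite -[_%:R]mulr1; apply: sumr_delta.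
under eq_bigr do rewrite sum_indicator.
by rewrite sumr_const card_ord mulVf // pnatr_eq0 -lt0n.
Qed.

Lemma empirical_cst (b : 'I_l) a : (0 < N)%N -> empirical [ffun=> b] a = (b == a)%:R.
Proof.
move=> N_gt0; rewrite ffunE; under eq_bigr do rewrite ffunE.
rewrite sumr_const card_ord; case: (b == a); rewrite ?mul0rn ?mulr0 // mulr1n.
by rewrite mulVf // pnatr_eq0 -lt0n.
Qed.

Lemma empirical_P1N y : (0 < N)%N -> in_P1N N (empirical y).
Proof.
move=> N_gt0; split; first by split; [exact: empirical_ge0 | exact: sum_empirical].
by move=> a; exists #|[pred k | y k == a]|%:Z; rewrite empiricalE.
Qed.

Lemma sum_perm_app (F : 'I_N -> R) (k : 'I_N) :
  N%:R * \sum_(s : 'S_N) F (s k) = N`!%:R * \sum_j F j.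
Proof.
have sum_at j : \sum_(s : 'S_N) F (s k) = \sum_(s : 'S_N) F (s j).
  rewrite (reindex_inj (mulgI (tperm k j))) /=.
  by apply: eq_bigr => s _; rewrite permM tpermL.
have -> : N%:R * \sum_(s : 'S_N) F (s k) = \sum_j \sum_(s : 'S_N) F (s j).
  by rewrite (eq_bigr _ (fun j _ => esym (sum_at j))) sumr_const card_ord mulr_natl.
rewrite exchange_big /= -sum_perm_cst; apply: eq_bigr => s _.
by rewrite [RHS](reindex_perm s).
Qed.

Lemma margE k g a : marg k g a = \sum_y g y * (y k == a)%:R.
Proof.
rewrite ffunE big_mkcond /=; apply: eq_bigr => y _.
by case: eqP; rewrite ?mulr1 ?mulr0.
Qed.

Lemma marg_symmetrize k g a :
  marg k (symmetrize g) a = \sum_y g y * empirical y a.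
Proof.
have N_neq0 : (N%:R : R) != 0 by rewrite pnatr_eq0 -lt0n (leq_ltn_trans _ (ltn_ord k)).
rewrite margE; under eq_bigr do rewrite symmetrizeE -mulrA mulr_suml.
rewrite -mulr_sumr exchange_big /=.
have permute_out (s : 'S_N) : \sum_(y : config N l) g (permute s y) * (y k == a)%:R =
    \sum_y g y * (y ((s^-1)%g k) == a)%:R.
  by rewrite -(big_permute _ (s^-1)%g); apply: eq_bigr => y _; rewrite permuteKV ffunE.
under eq_bigr do rewrite permute_out.
rewrite exchange_big mulr_sumr; apply: eq_bigr => y _ /=.
rewrite -mulr_sumr mulrCA ffunE; congr (_ * _).
rewrite (reindex_inj invg_inj) /=; under eq_bigr do rewrite invgK.
apply: (mulfI N_neq0); rewrite mulrCA (sum_perm_app (fun j => (y j == a)%:R)).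
by rewrite mulKf ?natr_fact_neq0 // mulVKf.
Qed.

Lemma M1_marg g (k0 : 'I_N) : nat_of_ord k0 = 0%N -> M1 g = marg k0 g.
Proof.
move=> k0_0; apply/ffunP => a; rewrite !ffunE; apply: eq_bigl => x.
apply/existsP/idP => [[k /andP[/eqP k_0 xk]]|xk0]; last by exists k0; rewrite k0_0.
by rewrite (_ : k0 = k) //; apply: val_inj; rewrite /= k0_0 k_0.
Qed.

Lemma M1_symmetrize g a : (0 < N)%N ->
  M1 (symmetrize g) a = \sum_y g y * empirical y a.
Proof. by move=> N_gt0; rewrite (M1_marg _ (Ordinal N_gt0)) ?marg_symmetrize. Qed.

Lemma sum_empirical_marg g a :
  \sum_y g y * empirical y a = (N%:R)^-1 * \sum_(k < N) marg k g a.
Proof.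
rewrite mulr_sumr; under [RHS]eq_bigr do rewrite margE mulr_sumr.
rewrite [RHS]exchange_big; apply: eq_bigr => y _ /=.
by rewrite ffunE mulrCA -!mulr_sumr.
Qed.

End Marginals.

Section ExtendedSums.
Context {R : realType}.
Local Open Scope ereal_scope.

Lemma sume_neqNy (I : Type) (s : seq I) (P : pred I) (F : I -> \bar R) :
  (forall i, P i -> F i != -oo) -> \sum_(i <- s | P i) F i != -oo.
Proof.
move=> FNy; elim/big_ind: _ => // x y.
by rewrite adde_eq_ninfty => /negPf-> /negPf->.
Qed.

Lemma mule_neqNy (r : R) (x : \bar R) : (0 <= r)%R -> x != -oo -> r%:E * x != -oo.
Proof.
case: x => [x _ _|+ _|//]; first by rewrite -EFinM.
by rewrite le_eqVlt => /predU1P[<-|r_gt0]; rewrite ?mul0e ?gt0_muley.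
Qed.

Lemma sume_distrr_neqNy (r : R) (I : Type) (s : seq I) (P : pred I) (F : I -> \bar R) :
  (forall i, P i -> F i != -oo) ->
  r%:E * \sum_(i <- s | P i) F i = \sum_(i <- s | P i) r%:E * F i.
Proof.
move=> FNy; apply: fin_num_sume_distrr => // i j Pi Pj.
by move: (FNy i Pi) (FNy j Pj); case: (F i); case: (F j).
Qed.

Lemma EFin_sume_distrl (I : Type) (s : seq I) (P : pred I) (r : I -> R) (x : \bar R) :
  (forall i, P i -> 0 <= r i)%R ->
  (\sum_(i <- s | P i) r i)%:E * x = \sum_(i <- s | P i) (r i)%:E * x.
Proof.
by move=> r_ge0; rewrite -sumEFin ge0_sume_distrl // => i Pi; rewrite lee_fin r_ge0.
Qed.

End ExtendedSums.

Section Cost.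
Context {R : realType} {N l : nat}.
Context {cN : config N l -> \bar R}.
Hypothesis cN_neqNy : forall x, cN x != -oo%E.
Implicit Types (g : {ffun config N l -> R}) (x y : config N l).

Lemma cost_neqNy g : (forall x, 0 <= g x) -> cost cN g != -oo%E.
Proof. by move=> g_ge0; apply: sume_neqNy => x _; apply: mule_neqNy. Qed.

Lemma cost_comb (J : finType) (w : J -> R) (h : J -> {ffun config N l -> R}) :
  (forall j, 0 <= w j) -> (forall j x, 0 <= h j x) ->
  cost cN [ffun x => \sum_j w j * h j x] = (\sum_j (w j)%:E * cost cN (h j))%E.
Proof.
move=> w_ge0 h_ge0; rewrite /cost.
have distr_x x : ((\sum_j w j * h j x)%:E * cN x = \sum_j (w j * h j x)%:E * cN x)%E.
  by rewrite EFin_sume_distrl // => j _; rewrite mulr_ge0.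
under eq_bigr do rewrite ffunE distr_x.
rewrite exchange_big; apply: eq_bigr => j _ /=.
rewrite sume_distrr_neqNy => [|x _]; last exact: mule_neqNy.
by apply: eq_bigr => x _; rewrite EFinM muleA.
Qed.

Lemma cost_dirac y : cost cN (dirac_cfg R y) = cN y.
Proof.
rewrite /cost (bigD1 y) //= ffunE eqxx mul1e big1 ?adde0 // => x /negPf xy.
by rewrite ffunE xy mul0e.
Qed.

Lemma dirac_cfg_ge0 y x : 0 <= dirac_cfg R y x.
Proof. by rewrite ffunE ler0n. Qed.

Lemma cost_symmetrize_decomp g : (forall x, 0 <= g x) ->
  cost cN (symmetrize g) =
  (\sum_y (g y)%:E * cost cN (symmetrize (dirac_cfg R y)))%E.
Proof.
move=> g_ge0; rewrite {1}symmetrize_dirac_decomp cost_comb // => y.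
exact/symmetrize_ge0/dirac_cfg_ge0.
Qed.

Lemma cost_symmetrize_dirac y :
  cost cN (symmetrize (dirac_cfg R y)) =
  (\sum_(s : 'S_N) ((N`!%:R)^-1)%:E * cN (permute s y))%E.
Proof.
have -> : symmetrize (dirac_cfg R y) =
    [ffun x => \sum_(s : 'S_N) (N`!%:R)^-1 * dirac_cfg R (permute (s^-1)%g y) x].
  apply/ffunP => x; rewrite symmetrizeE ffunE mulr_sumr; apply: eq_bigr => s _.
  rewrite !ffunE; congr (_ * (nat_of_bool _)%:R).
  by apply/eqP/eqP => [<-|->]; rewrite permuteM ?mulVg ?mulgV permute1.
rewrite cost_comb => [|s|s x]; last exact: dirac_cfg_ge0.
  under eq_bigr do rewrite cost_dirac.
  by rewrite (reindex_inj invg_inj) /=; under eq_bigr do rewrite invgK.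
by rewrite invr_ge0 ler0n.
Qed.

Lemma cost_symmetrize {g} : sym_cost cN -> (forall x, 0 <= g x) ->
  cost cN (symmetrize g) = cost cN g.
Proof.
move=> cN_sym g_ge0; rewrite cost_symmetrize_decomp //; apply: eq_bigr => y _.
rewrite cost_symmetrize_dirac; under eq_bigr do rewrite cN_sym.
rewrite -EFin_sume_distrl => [|s _]; last by rewrite invr_ge0 ler0n.
by rewrite sum_perm_cst mulfV ?natr_fact_neq0 // mul1e.
Qed.

End Cost.

Lemma functional_rel_min {T : eqType} {d} {V : orderType d} {r : T -> V -> Prop}
    {s : seq T} :
  (forall t v v', r t v -> r t v' -> v = v') ->
  (exists2 t, t \in s & exists v, r t v) ->
  exists t0 v0, r t0 v0 /\ forall t v, t \in s -> r t v -> (v0 <= v)%O.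
Proof.
move=> r_fun; elim: s => [[t //]|h s IHs hs_ex].
have [/IHs [t0 [v0 [r0 min0]]]|none_s] := classic (exists2 t, t \in s & exists v, r t v).
  have [[vh rh]|no_h] := classic (exists v, r h v); last first.
    exists t0, v0; split=> // t v; rewrite inE => /predU1P[->|/min0]; last exact.
    by move=> rt; case: no_h; exists v.
  have [v0_le|vh_lt] := leP v0 vh.
    exists t0, v0; split=> // t v; rewrite inE => /predU1P[->|/min0]; last exact.
    by move=> /(r_fun _ _ _ rh) <-.
  exists h, vh; split=> // t v; rewrite inE => /predU1P[->|/min0 min0t rt].
    by move=> /(r_fun _ _ _ rh) <-.
  exact: le_trans (ltW vh_lt) (min0t _ rt).
have [vh rh] : exists v, r h v.
  case: hs_ex => t; rewrite inE => /predU1P[->//|ts t_ex].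
  by case: none_s; exists t.
exists h, vh; split=> // t v; rewrite inE => /predU1P[->|ts rt].
  by move=> /(r_fun _ _ _ rh) <-.
by case: none_s; exists t => //; exists v.
Qed.

Lemma sum_eq0_exists_gt0 {R : realType} {I : finType} (d : I -> R) :
  \sum_i d i = 0 -> (exists i, d i != 0) -> exists j, 0 < d j.
Proof.
move=> sum_d0 [i di_neq0]; apply: NNPP => no_pos; move/negP: di_neq0; apply.
have d_le0 j : d j <= 0 by rewrite leNgt; apply/negP => dj; apply: no_pos; exists j.
rewrite -oppr_eq0; apply/eqP; move: i isT.
by apply: psumr_eq0P => [j _|]; rewrite ?oppr_ge0 // sumrN sum_d0 oppr0.
Qed.

Section LinearProgram.
Context {R : realType} {l : nat} {I : finType}.
Variables (e : I -> 'I_l -> R) (cb : I -> \bar R) (lam : 'I_l -> R).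
Hypothesis cb_neqNy : forall i, cb i != -oo%E.
Hypothesis sum_e : forall i, \sum_a e i a = 1.
Implicit Types (w d : I -> R) (S : {set I}).

Definition lp_feasible w :=
  (forall i, 0 <= w i) /\ forall a, \sum_i w i * e i a = lam a.

Definition lp_cost w : \bar R := (\sum_i (w i)%:E * cb i)%E.

Definition support w : {set I} := [set i | w i != 0].

Definition free_columns S := forall z : I -> R,
  (forall i, i \notin S -> z i = 0) -> (forall a, \sum_i z i * e i a = 0) ->
  forall i, z i = 0.

Lemma lp_cost_fin_num {w} : (forall i, 0 <= w i) -> lp_cost w != +oo%E ->
  forall i, w i != 0 -> cb i \is a fin_num.
Proof.
move=> w_ge0 cost_fin i wi_neq0; apply: contraNT cost_fin => cb_nfin.
have cbi_y : cb i = +oo%E by move: (cb_neqNy i) cb_nfin; case: (cb i).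
rewrite /lp_cost esum_eqy => [|j _]; last exact: mule_neqNy.
apply/existsP; exists i; rewrite cbi_y gt0_muley //.
by rewrite lte_fin lt_def wi_neq0 w_ge0.
Qed.

Lemma lp_cost_real {w} : (forall i, w i != 0 -> cb i \is a fin_num) ->
  lp_cost w = (\sum_i w i * fine (cb i))%:E.
Proof.
move=> cb_fin; rewrite /lp_cost -sumEFin; apply: eq_bigr => i _.
have [->|wi_neq0] := eqVneq (w i) 0; first by rewrite mul0e mul0r.
by rewrite EFinM fineK // cb_fin.
Qed.

Lemma lp_cost_le_real w w' : (forall i, 0 <= w i) ->
  (forall i, w i = 0 -> w' i = 0) ->
  \sum_i w' i * fine (cb i) <= \sum_i w i * fine (cb i) ->
  (lp_cost w' <= lp_cost w)%E.
Proof.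
move=> w_ge0 supp_w' real_le.
have [->|cost_fin] := eqVneq (lp_cost w) +oo%E; first exact: leey.
have cb_fin := lp_cost_fin_num w_ge0 cost_fin.
rewrite (lp_cost_real cb_fin) lp_cost_real ?lee_fin // => i w'i_neq0.
by apply: cb_fin; apply: contra_neq w'i_neq0; apply: supp_w'.
Qed.

Lemma sum_weights w : \sum_i w i = \sum_a \sum_i w i * e i a.
Proof.
rewrite exchange_big; apply: eq_bigr => i _ /=.
by rewrite -mulr_sumr sum_e mulr1.
Qed.

Lemma nonfree_direction {S} (f : I -> R) : ~ free_columns S ->
  exists d, [/\ forall i, i \notin S -> d i = 0,
    forall a, \sum_i d i * e i a = 0, exists j, 0 < d j
    & 0 <= \sum_i d i * f i].
Proof.
move=> nfree.
have [z [z_out z_ker [i0 zi0]]] : exists z : I -> R, [/\ forall i, i \notin S -> z i = 0,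
    forall a, \sum_i z i * e i a = 0 & exists i, z i != 0].
  apply: NNPP => no_z; apply: nfree => z z_out z_ker i; apply: NNPP => /eqP zi.
  by apply: no_z; exists z; split => //; exists i.
pose sg : R := if 0 <= \sum_i z i * f i then 1 else -1.
have sg_neq0 : sg != 0 by rewrite /sg; case: ifP; rewrite ?oppr_eq0 oner_eq0.
exists (fun i => sg * z i); split.
- by move=> i /z_out ->; rewrite mulr0.
- by move=> a; under eq_bigr do rewrite -mulrA; rewrite -mulr_sumr z_ker mulr0.
- apply: sum_eq0_exists_gt0; last by exists i0; rewrite mulf_neq0.
  (* The columns are probability vectors, so a kernel vector sums to zero. *)
  by rewrite -mulr_sumr sum_weights big1 ?mulr0.
- under eq_bigr do rewrite -mulrA; rewrite -mulr_sumr /sg.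
  by case: ifPn; rewrite ?mul1r // -ltNge mulN1r oppr_ge0 => /ltW.
Qed.

Lemma lp_support_descent {w} : lp_feasible w -> ~ free_columns (support w) ->
  exists w', [/\ lp_feasible w', support w' \proper support w
                 & (lp_cost w' <= lp_cost w)%E].
Proof.
move=> [w_ge0 w_lam] nfree.
have [d [d_out d_ker [j0 dj0_gt0] d_cost]] :=
  nonfree_direction (fun i => fine (cb i)) nfree.
have [js djs_gt0 ratio_min] :=
  @arg_minP _ _ _ j0 (fun j => 0 < d j) (fun j => w j / d j) dj0_gt0.
(* Ratio test: move along [-d] until the first weight of the support vanishes. *)
pose t := w js / d js; pose w' i := w i - t * d i.
have t_ge0 : 0 <= t by rewrite divr_ge0 ?w_ge0 ?ltW.
have w'_ge0 i : 0 <= w' i.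
  rewrite subr_ge0; have [di_gt0|di_le0] := ltP 0 (d i).
    by rewrite -ler_pdivlMr //; apply: ratio_min.
  exact: le_trans (mulr_ge0_le0 t_ge0 di_le0) (w_ge0 i).
have w'_out i : w i = 0 -> w' i = 0.
  by move=> wi0; rewrite /w' wi0 d_out ?mulr0 ?subr0 // inE wi0 eqxx.
exists w'; split.
- split=> // a; under eq_bigr do rewrite mulrBl -mulrA.
  by rewrite sumrB -mulr_sumr d_ker mulr0 subr0 w_lam.
- apply/properP; split.
    by apply/subsetP => i; rewrite !inE; apply: contra_neq; apply: w'_out.
  exists js; first by apply: contraTT djs_gt0 => /d_out ->; rewrite ltxx.
  by rewrite inE negbK /w' /t mulfVK ?subrr // gt_eqF.
- apply: lp_cost_le_real => //; rewrite /w'.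
  under eq_bigr do rewrite mulrBl -mulrA.
  by rewrite sumrB -mulr_sumr gerBl mulr_ge0.
Qed.

Lemma lp_free_descent {w} : lp_feasible w ->
  exists w', [/\ lp_feasible w', free_columns (support w')
                 & (lp_cost w' <= lp_cost w)%E].
Proof.
have [n] := ubnP #|support w|; elim: n w => // n IHn w card_w w_feas.
have [w_free|nfree] := classic (free_columns (support w)); first by exists w.
have [w1 [w1_feas /proper_card w1_lt w1_cost]] := lp_support_descent w_feas nfree.
have [w2 [w2_feas w2_free w2_cost]] := IHn w1 (leq_trans w1_lt card_w) w1_feas.
by exists w2; split=> //; apply: le_trans w1_cost.
Qed.

Lemma free_feasible_uniq {w1 w2} : lp_feasible w1 -> lp_feasible w2 ->
  free_columns (support w1) -> support w1 = support w2 -> w1 =1 w2.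
Proof.
move=> [_ w1_lam] [_ w2_lam] w1_free supp_eq i; apply/eqP; rewrite -subr_eq0; apply/eqP.
apply: (w1_free (fun i => w1 i - w2 i)) => [j|a].
  move=> j_out1; have j_out2 : j \notin support w2 by rewrite -supp_eq.
  by move: j_out1 j_out2; rewrite !inE !negbK => /eqP-> /eqP->; rewrite subrr.
by under eq_bigr do rewrite mulrBl; rewrite sumrB w1_lam w2_lam subrr.
Qed.

Lemma lp_min_free : (exists w, lp_feasible w) ->
  exists w0, [/\ lp_feasible w0, free_columns (support w0)
    & forall w, lp_feasible w -> (lp_cost w0 <= lp_cost w)%E].
Proof.
move=> [w w_feas].
pose r S v := exists w, [/\ lp_feasible w, free_columns (support w),
  support w = S & v = lp_cost w].
have r_fun S v v' : r S v -> r S v' -> v = v'.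
  move=> [w1 [w1_feas w1_free <- ->]] [w2 [w2_feas _ w21 ->]].
  by apply: eq_bigr => i _; rewrite (free_feasible_uniq w1_feas w2_feas w1_free (esym w21)).
have r_below w1 : lp_feasible w1 ->
    exists w', r (support w') (lp_cost w') /\ (lp_cost w' <= lp_cost w1)%E.
  by move=> /lp_free_descent [w' [w'_feas w'_free w'_le]]; exists w'; split=> //; exists w'.
have [w' [r_w' _]] := r_below w w_feas.
have r_ex : exists2 S, S \in enum {set I} & exists v, r S v.
  by exists (support w'); [rewrite mem_enum | exists (lp_cost w')].
have [S0 [v0 [[w0 [w0_feas w0_free _ ->]] v0_min]]] := functional_rel_min r_fun r_ex.
exists w0; split=> // w1 /r_below [w'' [r_w'' w''_le]].
by apply: le_trans w''_le; apply: v0_min r_w''; rewrite mem_enum.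
Qed.

Lemma free_columns_card S : free_columns S -> (#|S| <= l)%N.
Proof.
move=> S_free; pose A : 'M[R]_(#|S|, l) := \matrix_(k, a) e (enum_val k) a.
suff /eqP <- : row_free A by exact: rank_leq_col.
apply: inj_row_free => v vA0; apply/rowP => k.
pose z i := \sum_k' (i == enum_val k')%:R * v 0 k'.
have z_enum k' : z (enum_val k') = v 0 k'.
  by rewrite /z; under eq_bigr do rewrite (inj_eq enum_val_inj); exact: sumr_delta.
have z_out i : i \notin S -> z i = 0.
  move=> iS; rewrite /z big1 // => k' _.
  by rewrite (_ : (i == _) = false) ?mul0r //; apply: contraNF iS => /eqP->; apply: enum_valP.
have z_ker a : \sum_i z i * e i a = 0.
  transitivity ((v *m A) 0 a); last by rewrite vA0 mxE.
  rewrite mxE /z; under eq_bigr do rewrite mulr_suml.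
  rewrite exchange_big; apply: eq_bigr => k' _ /=; rewrite mxE.
  under eq_bigr do rewrite eq_sym -mulrA.
  exact: (sumr_delta (enum_val k') (fun i => v 0 k' * e i a)).
by rewrite mxE -z_enum (S_free z z_out z_ker).
Qed.

Lemma lp_min_small_support : (exists w, lp_feasible w) ->
  exists w0, [/\ lp_feasible w0, (#|support w0| <= l)%N
    & forall w, lp_feasible w -> (lp_cost w0 <= lp_cost w)%E].
Proof.
by move=> /lp_min_free [w0 [w0_feas /free_columns_card w0_card w0_min]]; exists w0.
Qed.

End LinearProgram.

Arguments lp_min_small_support {R l I e cb lam}.

Lemma reindex_small_support {R : realType} {l : nat} {I : finType} {w : I -> R} (i0 : I) :
  (forall i, 0 <= w i) -> (#|support w| <= l)%N ->
  exists (Y : 'I_l -> I) (alpha : 'I_l -> R), (forall nu, 0 <= alpha nu) /\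
    forall F : I -> R, \sum_nu alpha nu * F (Y nu) = \sum_i w i * F i.
Proof.
move=> w_ge0 card_w; pose s := enum (support w).
have size_s : (size s <= l)%N by rewrite -cardE.
exists (fun nu => nth i0 s nu), (fun nu => if (nu < size s)%N then w (nth i0 s nu) else 0).
split=> [nu|F]; first by case: ifP.
rewrite [RHS](bigID (fun i => i \in support w)) /= [X in _ + X]big1 ?addr0; last first.
  by move=> i; rewrite inE negbK => /eqP->; rewrite mul0r.
rewrite -[in RHS]big_enum -/s (big_nth i0) big_mkord.
rewrite (big_ord_widen l (fun n => w (nth i0 s n) * F (nth i0 s n)) size_s).
by rewrite [RHS]big_mkcond; apply: eq_bigr => nu _; case: ifP; rewrite ?mul0r.
Qed.

Section SAECombinations.
Context {R : realType} {N l : nat}.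
Implicit Types (alpha : 'I_l -> R) (Y : 'I_l -> config N l).

(* The SAE state [sum_nu alpha_nu S(delta_(T_1 a_nu) (x) ... (x) delta_(T_N a_nu))],
   with [Y nu] the configuration [(T_1 a_nu, ..., T_N a_nu)]. *)
Definition sae_comb alpha Y : {ffun config N l -> R} :=
  [ffun x => \sum_nu alpha nu * symmetrize (dirac_cfg R (Y nu)) x].

Lemma sae_combE alpha Y :
  sae_comb alpha Y = symmetrize [ffun y => \sum_nu alpha nu * (Y nu == y)%:R].
Proof.
rewrite symmetrize_dirac_decomp; apply/ffunP => x; rewrite !ffunE.
under [RHS]eq_bigr do rewrite ffunE mulr_suml.
rewrite [RHS]exchange_big; apply: eq_bigr => nu _ /=.
under eq_bigr do rewrite -mulrA.
by rewrite -mulr_sumr sumr_delta.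
Qed.

Lemma SAE_stateP (lam : {ffun 'I_l -> R}) g :
  SAE_state lam g <-> is_prob g /\ exists alpha Y,
    [/\ forall nu, 0 <= alpha nu, forall a, \sum_nu alpha nu * empirical (Y nu) a = lam a
      & g = sae_comb alpha Y].
Proof.
split=> [[g_prob [T [alpha [alpha_ge0 [alpha_lam g_def]]]]]|
         [g_prob [alpha [Y [alpha_ge0 alpha_lam g_def]]]]].
  split=> //; exists alpha, (fun nu => [ffun k => T k nu]); split=> // a.
  by rewrite -alpha_lam; apply: eq_bigr => nu _; rewrite lam_ofE.
pose T k nu := Y nu k.
have T_Y nu : [ffun k => T k nu] = Y nu by apply/ffunP => k; rewrite ffunE.
split=> //; exists T, alpha; split=> //; split=> [a|].
  by rewrite -alpha_lam; apply: eq_bigr => nu _; rewrite lam_ofE T_Y.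
rewrite g_def; apply: eq_ffun => x; apply: eq_bigr => nu _.
by rewrite T_Y.
Qed.

End SAECombinations.

Section Kantorovich.
Context {R : realType} {N l : nat}.
Hypothesis N_gt0 : (0 < N)%N.
Context {cN : config N l -> \bar R}.
Hypothesis cN_neqNy : forall x, cN x != -oo%E.
Context {lam_star : {ffun 'I_l -> R}}.
Hypothesis lam_prob : is_prob lam_star.
Implicit Types (g : {ffun config N l -> R}) (w : config N l -> R).

Local Notation feasible := (lp_feasible (fun y a => @empirical R N l y a) lam_star).
Local Notation lpcost := (lp_cost (fun y => cost cN (symmetrize (dirac_cfg R y)))).

Lemma lp_feasible_sum1 {w} : feasible w -> \sum_y w y = 1.
Proof.
move=> [_ w_lam]; rewrite (sum_weights _ (fun y => sum_empirical y N_gt0)).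
by under eq_bigr do rewrite w_lam; case: lam_prob.
Qed.

Lemma lp_feasible_kant {w} : feasible w ->
  kant_feasible lam_star (symmetrize [ffun y => w y]).
Proof.
move=> w_feas; split; last split.
- apply: is_prob_symmetrize; split=> [y|]; first by rewrite ffunE; case: w_feas.
  by under eq_bigr do rewrite ffunE; apply: lp_feasible_sum1.
- exact: symmetrize_idem.
- apply/ffunP => a; rewrite M1_symmetrize //; case: w_feas => _ <-.
  by apply: eq_bigr => y _; rewrite ffunE.
Qed.

Lemma cost_symmetrize_lp w : (forall y, 0 <= w y) ->
  cost cN (symmetrize [ffun y => w y]) = lpcost w.
Proof.
move=> w_ge0; rewrite (cost_symmetrize_decomp cN_neqNy) => [|y]; last by rewrite ffunE.
by apply: eq_bigr => y _; rewrite ffunE.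
Qed.

Lemma kant_feasible_lp {g} : kant_feasible lam_star g ->
  feasible g /\ cost cN g = lpcost g.
Proof.
move=> [[g_ge0 _] [g_sym g_M1]]; have g_symE : symmetrize g = g := g_sym.
split; first by split=> // a; rewrite -g_M1 -[in RHS]g_symE M1_symmetrize.
by rewrite -{1}g_symE (cost_symmetrize_decomp cN_neqNy).
Qed.

Lemma sae_comb_kant_feasible (alpha : 'I_l -> R) (Y : 'I_l -> config N l) :
  (forall nu, 0 <= alpha nu) ->
  (forall a, \sum_nu alpha nu * empirical (Y nu) a = lam_star a) ->
  kant_feasible lam_star (sae_comb alpha Y).
Proof.
move=> alpha_ge0 alpha_lam; rewrite sae_combE; apply: lp_feasible_kant; split=> [y|a].
  by apply: sumr_ge0 => nu _; rewrite mulr_ge0.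
rewrite -alpha_lam; under eq_bigr do rewrite mulr_suml.
rewrite exchange_big; apply: eq_bigr => nu _ /=.
under eq_bigr do rewrite -mulrA; rewrite -mulr_sumr.
by rewrite sumr_delta.
Qed.

Lemma lp_feasible_exists : exists w, feasible w.
Proof.
exists (fun y => \sum_b lam_star b * (y == [ffun=> b])%:R); split=> [y|a].
  by apply: sumr_ge0 => b _; rewrite mulr_ge0 ?ler0n //; case: lam_prob.
under eq_bigr do rewrite mulr_suml; rewrite exchange_big /=.
have cst_b b : \sum_(y : config N l) lam_star b * (y == [ffun=> b])%:R * empirical y a =
    lam_star b * (b == a)%:R.
  under eq_bigr do rewrite -mulrA eq_sym.
  by rewrite -mulr_sumr (sumr_delta _ (fun y => empirical y a)) empirical_cst.
under eq_bigr do rewrite cst_b mulrC eq_sym.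
by rewrite sumr_delta.
Qed.

Lemma SAE_kant_minimizer_exists :
  exists g, SAE_state lam_star g /\ kant_minimizer cN lam_star g.
Proof.
have cb_neqNy y : cost cN (symmetrize (dirac_cfg R y)) != -oo%E.
  exact/cost_neqNy/symmetrize_ge0/dirac_cfg_ge0.
have [w0 [w0_feas w0_card w0_min]] :=
  lp_min_small_support cb_neqNy (fun y => sum_empirical y N_gt0) lp_feasible_exists.
have [y0 _] : exists y0, w0 y0 != 0.
  apply: NNPP => no_y0; move: (lp_feasible_sum1 w0_feas); rewrite big1 => [/eqP|y _].
    by rewrite eq_sym oner_eq0.
  by apply/eqP/negPn/negP => w0y; apply: no_y0; exists y.
have [Y [alpha [alpha_ge0 alpha_rep]]] :=
  reindex_small_support y0 (proj1 w0_feas) w0_card.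
have g0_comb : symmetrize [ffun y => w0 y] = sae_comb alpha Y.
  rewrite sae_combE; congr symmetrize; apply/ffunP => y; rewrite !ffunE.
  rewrite (alpha_rep (fun y' => (y' == y)%:R)).
  by under eq_bigr do rewrite mulrC eq_sym; rewrite sumr_delta.
exists (symmetrize [ffun y => w0 y]); split.
  apply/SAE_stateP; split; first by case: (lp_feasible_kant w0_feas).
  exists alpha, Y; split=> // a.
  by rewrite (alpha_rep (fun y => empirical y a)); case: w0_feas => _ ->.
split=> [|g' /kant_feasible_lp [g'_feas ->]]; first exact: lp_feasible_kant.
by rewrite cost_symmetrize_lp ?w0_min //; case: w0_feas.
Qed.

Lemma kant_minimizer_all_marginals g : kant_minimizer cN lam_star g -> sym_cost cN ->
  forall g', is_prob g' -> (forall k, marg k g' = lam_star) -> (cost cN g <= cost cN g')%E.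
Proof.
move=> [_ g_min] cN_sym g' g'_prob g'_marg.
rewrite -(cost_symmetrize cN_neqNy cN_sym (proj1 g'_prob)); apply: g_min.
split; first exact: is_prob_symmetrize.
split; first exact: symmetrize_idem.
apply/ffunP => a; rewrite M1_symmetrize // sum_empirical_marg.
under eq_bigr do rewrite g'_marg.
by rewrite sumr_const card_ord -[lam_star a *+ N]mulr_natl mulKf // pnatr_eq0 -lt0n.
Qed.

Lemma kant_minimizer_cost_eq {g g'} :
  kant_minimizer cN lam_star g -> kant_minimizer cN lam_star g' -> cost cN g = cost cN g'.
Proof.
by move=> [g_feas g_min] [g'_feas g'_min]; apply: le_anti; rewrite g_min ?g'_min.
Qed.

End Kantorovich.

Lemma sume_regroup {R : realType} {I J : finType} (y : I -> J) (h : I -> I -> R)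
    (G : J -> J -> \bar R) : (forall p q, 0 <= h p q) ->
  (\sum_p \sum_q (h p q)%:E * G (y p) (y q) =
   \sum_a \sum_b (\sum_(p | y p == a) \sum_(q | y q == b) h p q)%:E * G a b)%E.
Proof.
move=> h_ge0; rewrite (partition_big y xpredT) //; apply: eq_bigr => a _.
transitivity (\sum_(p | y p == a) \sum_q (h p q)%:E * G a (y q))%E.
  by apply: eq_bigr => p /eqP->.
under eq_bigr do rewrite (partition_big y xpredT) //=.
rewrite exchange_big; apply: eq_bigr => b _ /=.
rewrite EFin_sume_distrl => [|p _]; last exact: sumr_ge0.
apply: eq_bigr => p _; rewrite EFin_sume_distrl //.
by apply: eq_bigr => q /eqP->.
Qed.

Section PairCost.
Context {R : realType} {l N : nat}.
Context {c : 'I_l -> 'I_l -> \bar R}.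
Hypothesis c_neqNy : forall a b, c a b != -oo%E.
Implicit Types (y : config N l) (s : 'S_N).

Definition I_red_term (lam : {ffun 'I_l -> R}) : \bar R :=
  ((N%:R ^+ 2 / 2)%:E *
     (\sum_(x < l) \sum_(y < l | y != x) (lam x * lam y)%:E * c x y)
   + \sum_(x < l) ((N%:R ^+ 2 * lam x ^+ 2 - N%:R * lam x) / 2)%:E * c x x)%E.

Lemma I_redE (alpha : 'I_l -> R) (Lam : 'I_l -> {ffun 'I_l -> R}) :
  I_red N c alpha Lam = (\sum_nu (alpha nu)%:E * I_red_term (Lam nu))%E.
Proof. by []. Qed.

Lemma pair_cost_neqNy y : pair_cost c y != -oo%E.
Proof. by apply: sume_neqNy => i _; apply: sume_neqNy. Qed.

Lemma pair_cost_permute s y : pair_cost c (permute s y) =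
  (\sum_p \sum_q (((s^-1)%g p < (s^-1)%g q)%N%:R)%:E * c (y p) (y q))%E.
Proof.
rewrite /pair_cost (reindex_perm (s^-1)%g); apply: eq_bigr => p _.
rewrite big_mkcond (reindex_perm (s^-1)%g); apply: eq_bigr => q _.
by rewrite !ffunE !permKV; case: ltnP; rewrite ?mul1e ?mul0e.
Qed.

Lemma sum_perm_lt (p q : 'I_N) :
  \sum_(s : 'S_N) (((s^-1)%g p < (s^-1)%g q)%N%:R : R) = N`!%:R * ((p != q)%:R / 2).
Proof.
rewrite (reindex_inj invg_inj) /=; under eq_bigr do rewrite invgK.
have swap : \sum_(s : 'S_N) ((s p < s q)%N%:R : R) = \sum_(s : 'S_N) ((s q < s p)%N%:R : R).
  rewrite (reindex_inj (mulgI (tperm p q))) /=.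
  by apply: eq_bigr => s _; rewrite !permM tpermL tpermR.
suff: 2 * \sum_(s : 'S_N) ((s p < s q)%N%:R : R) = N`!%:R * (p != q)%:R.
  by move=> sum2; rewrite mulrA -sum2; field.
rewrite mulr2n mulrDl !mul1r {2}swap -big_split /= -sum_perm_cst.
apply: eq_bigr => s _; have [->|pq] := eqVneq p q; first by rewrite ltnn addr0.
case: ltngtP => [_|_|/val_inj/perm_inj spq]; rewrite /= ?addr0 ?add0r //.
by rewrite spq eqxx in pq.
Qed.

Lemma cost_pair_symmetrize_dirac y :
  cost (pair_cost c) (symmetrize (dirac_cfg R y)) =
  (\sum_p \sum_q ((p != q)%:R / 2)%:E * c (y p) (y q))%E.
Proof.
rewrite (cost_symmetrize_dirac pair_cost_neqNy).
have distr s : ((N`!%:R^-1)%:E * pair_cost c (permute s y) =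
    \sum_p \sum_q (N`!%:R^-1 * ((s^-1)%g p < (s^-1)%g q)%N%:R)%:E * c (y p) (y q))%E.
  rewrite pair_cost_permute sume_distrr_neqNy => [|p _]; last first.
    by apply: sume_neqNy => q _; apply: mule_neqNy.
  apply: eq_bigr => p _; rewrite sume_distrr_neqNy => [|q _]; last exact: mule_neqNy.
  by apply: eq_bigr => q _; rewrite muleA EFinM.
under eq_bigr do rewrite distr.
rewrite exchange_big; apply: eq_bigr => p _ /=.
rewrite exchange_big; apply: eq_bigr => q _ /=.
rewrite -EFin_sume_distrl => [|s _]; last by rewrite mulr_ge0 ?invr_ge0.
by rewrite -mulr_sumr sum_perm_lt mulKf ?natr_fact_neq0.
Qed.

Lemma count_distinct_pairs y (a b : 'I_l) :
  \sum_(p | y p == a) \sum_(q | y q == b) ((p != q)%:R : R) =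
  (\sum_k (y k == a)%:R) * ((\sum_k (y k == b)%:R) - (a == b)%:R).
Proof.
have inner p : y p == a ->
    \sum_(q | y q == b) ((p != q)%:R : R) = \sum_k (y k == b)%:R - (a == b)%:R.
  move=> /eqP ypa; rewrite big_mkcond /=.
  transitivity (\sum_q ((y q == b)%:R - (p == q)%:R * (y q == b)%:R) : R).
    apply: eq_bigr => q _; case: (y q == b); case: (p == q);
    by rewrite /= ?mul1r ?mul0r ?subrr ?subr0.
  by rewrite sumrB sumr_delta ypa.
rewrite (eq_bigr _ inner) big_mkcond /= mulr_suml; apply: eq_bigr => p _.
by case: (y p == a); rewrite ?mul1r ?mul0r.
Qed.

Hypothesis N_gt0 : (0 < N)%N.

Lemma cost_pair_symmetrize_red y :
  cost (pair_cost c) (symmetrize (dirac_cfg R y)) = I_red_term (empirical y).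
Proof.
have N_neq0 : (N%:R : R) != 0 by rewrite pnatr_eq0 -lt0n.
pose n a : R := \sum_k (y k == a)%:R.
have empE a : empirical y a = N%:R^-1 * n a by rewrite ffunE.
rewrite cost_pair_symmetrize_dirac (sume_regroup y (fun p q => (p != q)%:R / 2) c) => [|p q];
  last by rewrite divr_ge0 ?ler0n.
have coef a b : \sum_(p | y p == a) \sum_(q | y q == b) ((p != q)%:R / 2) =
    n a * (n b - (a == b)%:R) / 2 :> R.
  by rewrite -count_distinct_pairs mulr_suml; apply: eq_bigr => p _; rewrite mulr_suml.
have split_diag a : (\sum_b (n a * (n b - (a == b)%:R) / 2)%:E * c a b =
    ((n a * n a - n a) / 2)%:E * c a a + \sum_(b | b != a) (n a * n b / 2)%:E * c a b)%E.
  rewrite (bigD1 a) //= eqxx mulrBr mulr1; congr (_ + _)%E.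
  by apply: eq_bigr => b; rewrite eq_sym => /negPf->; rewrite subr0.
under eq_bigr do under eq_bigr do rewrite coef.
under eq_bigr do rewrite split_diag.
rewrite big_split /= /I_red_term addeC; congr (_ + _)%E.
  rewrite sume_distrr_neqNy => [|a _]; last first.
    by apply: sume_neqNy => b _; apply: mule_neqNy; rewrite ?mulr_ge0 ?empirical_ge0.
  apply: eq_bigr => a _; rewrite sume_distrr_neqNy => [|b _]; last first.
    by apply: mule_neqNy; rewrite ?mulr_ge0 ?empirical_ge0.
  by apply: eq_bigr => b _; rewrite muleA -EFinM !empE; congr (_%:E * _)%E; field.
by apply: eq_bigr => a _; rewrite empE; congr (_%:E * _)%E; field.
Qed.

End PairCost.

Arguments I_red_term {R l} N c lam.

Section SortedConfigurations.
Context {R : realType} {N l : nat}.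
Hypothesis N_gt0 : (0 < N)%N.
Implicit Types (lam : {ffun 'I_l -> R}) (y : config N l).

Lemma P1N_counts {lam} : in_P1N N lam ->
  exists n : 'I_l -> nat, (forall a, N%:R * lam a = (n a)%:R) /\ (\sum_a n a = N)%N.
Proof.
have N_neq0 : (N%:R : R) != 0 by rewrite pnatr_eq0 -lt0n.
move=> [[lam_ge0 lam1] lam_int]; have [m lam_m] := fin_all_exists lam_int.
have n_lam a : N%:R * lam a = (`|m a|%N)%:R.
  have m_ge0 : 0 <= m a by rewrite -(ler0z R) -(mulfVK N_neq0 (m a)%:~R) -lam_m mulr_ge0.
  by rewrite lam_m mulrC mulfVK // -{1}(gez0_abs m_ge0).
exists (fun a => `|m a|%N); split=> //; apply/eqP; rewrite -(eqr_nat R) natr_sum.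
by under eq_bigr do rewrite -n_lam; rewrite -mulr_sumr lam1 mulr1.
Qed.

Lemma sorted_cfg_exists {lam} : in_P1N N lam -> exists y, sorted_cfg_for lam y.
Proof.
move=> lam_P1N; have [n [n_lam n_sum]] := P1N_counts lam_P1N.
have [a0 _|no_a] := pickP (@predT 'I_l); last first.
  by have := N_gt0; rewrite -n_sum big_pred0.
pose s := sort (fun a b : 'I_l => (a <= b)%N) (flatten [seq nseq (n a) a | a <- enum 'I_l]).
have count_s a : count_mem a s = n a.
  rewrite count_sort count_flatten -map_comp sumnE big_map big_enum /=.
  rewrite (bigD1 a) //= count_nseq /= eqxx mul1n big1 ?addn0 // => b ba.
  by rewrite count_nseq /= (negPf ba).
have size_s : size s = N.
  rewrite -n_sum -(count_predT s) count_sort count_flatten -map_comp sumnE big_map big_enum /=.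
  by apply: eq_bigr => a _; rewrite count_nseq /= mul1n.
exists [ffun k : 'I_N => nth a0 s k]; apply/andP; split.
  apply/forallP => k1; apply/forallP => k2; apply/implyP => k12; rewrite !ffunE.
  have s_sorted : sorted (fun a b : 'I_l => (a <= b)%N) s.
    by apply: sort_sorted => a b; exact: leq_total.
  have le_trans_ord : transitive (fun a b : 'I_l => (a <= b)%N).
    by move=> b a c; apply: leq_trans.
  by apply: (sorted_leq_nth le_trans_ord (fun a => leqnn a) a0 s_sorted); rewrite ?inE ?size_s.
apply/forallP => a; rewrite n_lam -count_s eqr_nat.
rewrite -sum1_count (big_nth a0) size_s big_mkord -sum1_card.
by apply/eqP; apply: eq_bigl => k; rewrite inE ffunE.
Qed.

Lemma sorted_cfg_empirical {lam y} : sorted_cfg_for lam y -> empirical y = lam.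
Proof.
move=> /andP[_ /forallP y_count]; apply/ffunP => a.
by rewrite empiricalE (eqP (y_count a)) mulrC mulKf // pnatr_eq0 -lt0n.
Qed.

Lemma psiN_spec {lam} : in_P1N N lam ->
  exists y, psiN N lam = symmetrize (dirac_cfg R y) /\ empirical y = lam.
Proof.
move=> lam_P1N; rewrite /psiN; case: pickP => [y y_sorted|no_sorted].
  by exists y; split=> //; apply: sorted_cfg_empirical.
by have [y] := sorted_cfg_exists lam_P1N; rewrite no_sorted.
Qed.

End SortedConfigurations.

Section ReducedProblem.
Context {R : realType} {l N : nat}.
Hypothesis N_gt0 : (0 < N)%N.
Context {c : 'I_l -> 'I_l -> \bar R}.
Hypothesis c_neqNy : forall a b, c a b != -oo%E.
Context {lam_star : {ffun 'I_l -> R}}.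
Hypothesis lam_prob : is_prob lam_star.

Lemma cost_pair_sae_comb (alpha : 'I_l -> R) (Y : 'I_l -> config N l) :
  (forall nu, 0 <= alpha nu) ->
  cost (pair_cost c) (sae_comb alpha Y) =
  (\sum_nu (alpha nu)%:E * I_red_term N c (empirical (Y nu)))%E.
Proof.
move=> alpha_ge0; rewrite (cost_comb (pair_cost_neqNy c_neqNy)) // => [|nu x].
  by apply: eq_bigr => nu _; rewrite cost_pair_symmetrize_red.
exact/symmetrize_ge0/dirac_cfg_ge0.
Qed.

Lemma red_feasible_psi_comb {alpha Lam} : red_feasible N lam_star alpha Lam ->
  kant_feasible lam_star (psi_comb N alpha Lam) /\
  cost (pair_cost c) (psi_comb N alpha Lam) = I_red N c alpha Lam.
Proof.
move=> [alpha_ge0 [Lam_P1N alpha_lam]].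
have [Y Y_spec] := fin_all_exists (fun nu => psiN_spec N_gt0 (Lam_P1N nu)).
have psi_comb_sae : psi_comb N alpha Lam = sae_comb alpha Y.
  by apply/ffunP => x; rewrite !ffunE; apply: eq_bigr => nu _; case: (Y_spec nu) => ->.
rewrite psi_comb_sae cost_pair_sae_comb // I_redE; split.
  apply: sae_comb_kant_feasible => // a; rewrite -alpha_lam.
  by apply: eq_bigr => nu _; case: (Y_spec nu) => _ ->.
by apply: eq_bigr => nu _; case: (Y_spec nu) => _ ->.
Qed.

Lemma SAE_state_red_feasible {g : {ffun config N l -> R}} : SAE_state lam_star g ->
  exists alpha Lam, red_feasible N lam_star alpha Lam /\
    cost (pair_cost c) g = I_red N c alpha Lam.
Proof.
move=> /SAE_stateP [_ [alpha [Y [alpha_ge0 alpha_lam ->]]]].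
exists alpha, (fun nu => empirical (Y nu)); split.
  by split=> //; split=> // nu; apply: empirical_P1N.
by rewrite cost_pair_sae_comb.
Qed.

Context {g0 : {ffun config N l -> R}}.
Hypothesis g0_SAE : SAE_state lam_star g0.
Hypothesis g0_min : kant_minimizer (pair_cost c) lam_star g0.

Lemma kant_min_le_I_red alpha Lam : red_feasible N lam_star alpha Lam ->
  (cost (pair_cost c) g0 <= I_red N c alpha Lam)%E.
Proof.
move=> /red_feasible_psi_comb [psi_feas <-]; exact: g0_min.2.
Qed.

Lemma red_minimizer_exists : exists alpha Lam, red_minimizer N c lam_star alpha Lam.
Proof.
have [alpha0 [Lam0 [feas0 cost0]]] := SAE_state_red_feasible g0_SAE.
by exists alpha0, Lam0; split=> // alpha Lam /kant_min_le_I_red; rewrite cost0.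
Qed.

Lemma red_minimizer_value {alpha Lam} : red_minimizer N c lam_star alpha Lam ->
  I_red N c alpha Lam = cost (pair_cost c) g0.
Proof.
move=> [feas red_min]; apply: le_anti; rewrite kant_min_le_I_red // andbT.
have [alpha0 [Lam0 [feas0 ->]]] := SAE_state_red_feasible g0_SAE.
exact: red_min.
Qed.

Lemma red_minimizer_psi_comb {alpha Lam} : red_minimizer N c lam_star alpha Lam ->
  kant_minimizer (pair_cost c) lam_star (psi_comb N alpha Lam).
Proof.
move=> red_min; have [psi_feas psi_cost] := red_feasible_psi_comb red_min.1.
by split=> // g g_feas; rewrite psi_cost (red_minimizer_value red_min) g0_min.2.
Qed.

End ReducedProblem.

Theorem theorem5p3 (R : realType) (l N : nat) (hN : (2 <= N)%N)
    (cN : config N l -> \bar R) (hcN : forall x, cN x != -oo%E)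
    (lam_star : {ffun 'I_l -> R}) (hlam : is_prob lam_star) :
  (* (a) *)
  (exists g : {ffun config N l -> R},
     SAE_state lam_star g /\ kant_minimizer cN lam_star g /\
     (sym_cost cN ->
        forall g' : {ffun config N l -> R}, is_prob g' ->
          (forall k : 'I_N, marg k g' = lam_star) ->
          (cost cN g <= cost cN g')%E)) /\
  (* (b) *)
  (forall c : 'I_l -> 'I_l -> \bar R, (forall x y, c x y != -oo%E) ->
     (forall x, cN x = pair_cost c x) ->
     (exists (alpha : 'I_l -> R) (Lam : 'I_l -> {ffun 'I_l -> R}),
        red_minimizer N c lam_star alpha Lam) /\
     (forall (g : {ffun config N l -> R}) (alpha : 'I_l -> R)
             (Lam : 'I_l -> {ffun 'I_l -> R}),
        kant_minimizer cN lam_star g -> red_minimizer N c lam_star alpha Lam ->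
        cost cN g = I_red N c alpha Lam) /\
     (forall (alpha : 'I_l -> R) (Lam : 'I_l -> {ffun 'I_l -> R}),
        red_minimizer N c lam_star alpha Lam ->
        kant_minimizer cN lam_star (psi_comb N alpha Lam))).
Proof.
have N_gt0 : (0 < N)%N := ltnW hN.
have [g0 [g0_SAE g0_min]] := SAE_kant_minimizer_exists N_gt0 hcN hlam.
split; first by exists g0; do 2!split=> //; exact: kant_minimizer_all_marginals.
move=> c c_neqNy /boolp.funext cN_pair; subst cN.
split; first exact: (red_minimizer_exists N_gt0 c_neqNy hlam g0_SAE g0_min).
split=> [g alpha Lam g_min red_min|alpha Lam red_min].
  rewrite (red_minimizer_value N_gt0 c_neqNy hlam g0_SAE g0_min red_min).
  exact: (kant_minimizer_cost_eq g_min g0_min).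
exact: (red_minimizer_psi_comb N_gt0 c_neqNy hlam g0_SAE g0_min red_min).
Qed.
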